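(* For all integers $n$ define $A(n) = \sum_{k \in \mathbb{Z}} \binom{n}{k}^2\binom{n+k}{k}^2$. Then $A(-n) = A(n-1)$ for all integers $n$. Consequently, for primes $p\ge 5$ and integers $r \ge 1$, $m \ge 1$, the congruence $A(p^r m - 1) \equiv A(p^{r-1}m - 1) \pmod{p^{3r}}$ is equivalent to $A(p^r m') \equiv A(p^{r-1} m') \pmod{p^{3r}}$ with $m'=-m$.
   Context: For all integers $n, k$, the binomial coefficient is defined by $\binom{n}{k} = \lim_{z \to 0} \frac{\Gamma(z+n+1)}{\Gamma(z+k+1)\Gamma(z+n-k+1)}$. This is a finite integer for all $n,k\in\mathbb{Z}$, agrees with the usual binomial coefficient for $n \ge 0$, and satisfies $\binom{n}{k}=\binom{n}{n-k}$. For $n\ge0$, $A(n)$ is the Apéry number $\sum_{k=0}^n\binom{n}{k}^2\binom{n+k}{k}^2$. *)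

From HB Require Import structures.
From mathcomp Require Import all_boot all_order all_algebra.
Set Implicit Arguments. Unset Strict Implicit. Unset Printing Implicit Defensive.
Import Order.TTheory GRing.Theory Num.Theory.
Local Open Scope ring_scope.

(* Binomial coefficient extended to all integers n, k, i.e. the value of
   lim_{z->0} Gamma(z+n+1)/(Gamma(z+k+1) Gamma(z+n-k+1)).  Explicitly:
   - n >= 0 : the usual binomial 'C(n,k) for k >= 0, and 0 for k < 0;
   - n < 0, k >= 0 : (-1)^k * C(-n+k-1, k);
   - n < 0, k <= n : (-1)^(n-k) * C(-k-1, n-k);
   - n < k < 0 : 0.
   With n = Negz n' = -(n'+1) and k = Negz k' = -(k'+1). *)
Definition binz (n k : int) : int :=
  match n, k with
  | Posz n', Posz k' => ('C(n', k'))%:Z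
  | Posz _, Negz _ => 0
  | Negz n', Posz k' => (-1) ^+ k' * ('C(n' + k', k'))%:Z
  | Negz n', Negz k' =>
      if (n' <= k')%N then (-1) ^+ (k' - n') * ('C(k', k' - n'))%:Z else 0
  end.

(* A(n) = sum_{k in Z} binz(n,k)^2 binz(n+k,k)^2.  The summand vanishes
   outside 0 <= k <= |n|, so the sum over Z equals the finite sum over
   k in [-N, N] with N = |n| + 1. *)
Definition Apery (n : int) : int :=
  let N := (`|n|%N + 1)%N in
  \sum_(0 <= i < N + N + 1)
     let k := (i%:Z - N%:Z) in (binz n k) ^+ 2 * (binz (n + k) k) ^+ 2.

From HB Require Import structures.
From mathcomp Require Import all_boot all_order all_algebra zify.
Import Order.TTheory GRing.Theory Num.Theory.
Local Open Scope ring_scope.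

(* For n = -(N+1) and 0 <= k <= N one has binz n k = (-1)^k C(N+k, k) and
   binz (n+k) k = (-1)^k C(N, k), so the summands of A(-(N+1)) are those of
   A(N) with the two squared factors swapped; all other summands of both sums
   vanish.  Hence A(-n) = A(n-1), and the two congruences are the same
   statement once A(p^s m') is rewritten as A(p^s m - 1). *)

Definition apery_term (n k : int) : int := binz n k ^+ 2 * binz (n + k) k ^+ 2.

Lemma Apery_sum_nat n N : (N <= `|n| + 1)%N ->
  (forall k : int, k < 0 -> apery_term n k = 0) ->
  (forall k : nat, (N < k)%N -> apery_term n k = 0) ->
  Apery n = \sum_(0 <= k < N.+1) apery_term n k.
Proof.
move=> leN term_neg term_big; rewrite /Apery; set L := (`|n| + 1)%N.
rewrite (big_cat_nat _ (n := L)) //=; last by lia.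
rewrite big_nat big1 ?add0r; last first.
  by move=> i /andP[_ ltiL]; apply: term_neg; rewrite subr_lt0 ltz_nat.
rewrite -{1}(add0n L) big_addn.
under eq_bigr => i _ do rewrite PoszD addrK.
rewrite (big_cat_nat _ (n := N.+1)) //=; last by lia.
rewrite [X in _ + X](_ : _ = 0) ?addr0 // big_nat big1 // => i /andP[ltNi _].
exact: term_big.
Qed.

Lemma sqr_signr (k : nat) : ((-1 : int) ^+ k) ^+ 2 = 1.
Proof. by rewrite -exprM mulnC exprM sqrrN !expr1n. Qed.

Lemma Apery_Negz N : Apery (Negz N) = Apery N.
Proof.
have size_Negz : (N <= `|Negz N| + 1)%N by rewrite /=; lia.
rewrite (@Apery_sum_nat (Negz N) N) //; last 2 first.
- case=> // k _; rewrite /apery_term /=.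
  have -> : ((N + k).+1 <= k)%N = false by lia.
  by rewrite expr0n mulr0.
- move=> k ltNk; rewrite /apery_term.
  have -> : Negz N + k%:Z = Posz (k - N.+1) by rewrite NegzE; lia.
  by rewrite /= (@bin_small (k - N.+1) k) ?expr0n ?mulr0 //; lia.
rewrite (@Apery_sum_nat N N) //; last 3 first.
- by rewrite /=; lia.
- by case=> // k _; rewrite /apery_term /= expr0n mul0r.
- by move=> k ltNk; rewrite /apery_term /= bin_small // expr0n mul0r.
apply: eq_big_nat => k /andP[_ lekN]; rewrite /apery_term.
have -> : Negz N + k%:Z = Negz (N - k) by rewrite !NegzE; lia.
by rewrite /= subnK // !exprMn !sqr_signr !mul1r mulrC.
Qed.

Lemma Apery_opp n : Apery (- n) = Apery (n - 1).
Proof.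
case: n => [[|N]|N].
- by rewrite oppr0 sub0r -(Apery_Negz 0).
- by rewrite -Apery_Negz NegzE; congr Apery; lia.
- by rewrite -Apery_Negz; congr Apery; rewrite !NegzE; lia.
Qed.

Theorem mainTheorem4 :
  (forall n : int, Apery (- n) = Apery (n - 1)) /\
  (forall (p r : nat) (m : int), prime p -> (5 <= p)%N -> (1 <= r)%N -> 0 < m ->
     let m' := - m in
     ((Apery ((p%:Z) ^+ r * m - 1) = Apery ((p%:Z) ^+ r.-1 * m - 1)
         %[mod (p%:Z) ^+ (3 * r)])%Z
      <->
      (Apery ((p%:Z) ^+ r * m') = Apery ((p%:Z) ^+ r.-1 * m')
         %[mod (p%:Z) ^+ (3 * r)])%Z)).
Proof.
split; first exact: Apery_opp.
by move=> p r m _ _ _ _ /=; rewrite !mulrN !Apery_opp.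
Qed.
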